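(* In the setting described in the context, full revelation to Seller maximizes Seller's expected payoff among all information structures of Seller.
   Context: Let $0<q_\ell<q_h<\infty$, $Q=[q_\ell,q_h]$, and let $c$ be a real number with $0<c<q_\ell$. Let $F$ be a probability distribution on $[0,1]$ with support $[0,1]$ admitting a twice continuously differentiable density $f:(0,1)\to\mathbb{R}_{>0}$. Define $r(v)=(1-F(v))/f(v)$ and $\psi(v)=v-r(v)$ on $(0,1)$, and assume $\psi'(v)>0$ whenever $\psi(v)>0$. For $q\in Q$, $p(q)$ is the unique maximizer over $p\in\mathbb{R}$ of $(p-c)\big(1-F(p/q)\big)$. Model: the quality $q$ is drawn from a prior $\mu\in\Delta(Q)$ with support $Q$; Buyer's type $v\sim F$ is independent of $q$. Seller's information structure is $(X,\pi^S)$, with $X$ a measurable signal space and $\pi^S:Q\to\Delta(X)$; $\mu^S$ denotes the distribution of Seller's Bayesian posterior mean of $q$. The distribution $\mu^B$ of Buyer's posterior means is assumed to equal $\mu^S$. Seller's expected payoff is $\mathbb{E}_{q\sim\mu^B}\big[(p(q)-c)\big(1-F(p(q)/q)\big)\big]$. Full revelation is the information structure with $X=Q$ and $\pi^S(\cdot\mid q)$ the point mass at $q$. *)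

From HB Require Import structures.
From mathcomp Require Import all_boot all_order all_algebra.
From mathcomp Require Import all_classical all_reals all_analysis.
Set Implicit Arguments. Unset Strict Implicit. Unset Printing Implicit Defensive.
Import Order.TTheory GRing.Theory Num.Theory.
Import numFieldNormedType.Exports.
Local Open Scope classical_set_scope.
Local Open Scope ring_scope.

Section Defs.
Context {R : realType}.

Definition profit (c : R) (F : R -> R) (p q : R) : R :=
  (p - c) * (1 - F (p / q)).

Definition virtual_value (F f : R -> R) (v : R) : R := v - (1 - F v) / f v.

(* m : X -> R is (a Q-valued version of) Seller's posterior mean of q under
   the information structure (X, k) with prior mu:
   m is measurable and, for every measurable B of signals,
   E[q ; x \in B] = E[m(x) ; x \in B] for the joint law mu(dq) k(q)(dx). *)
Definition is_posterior_mean (ql qh : R) (mu : {measure set R -> \bar R})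
  d (X : measurableType d) (k : R -> {measure set X -> \bar R}) (m : X -> R) :=
  [/\ measurable_fun [set: X] m,
      (forall x, ql <= m x <= qh) &
      (forall B, measurable B ->
        (\int[mu]_(q in `[ql, qh]) ((q%:E * k q B)%E)
         = \int[mu]_(q in `[ql, qh]) \int[k q]_(x in B) (m x)%:E)%E)].

(* Seller's expected payoff E_{y ~ mu^S}[ profit(p(y), y) ], where mu^S is the
   law of the posterior mean m(x), x ~ \int mu(dq) k(q)(dx); written as the
   integral of the composite y = m(x) against that joint law. *)
Definition seller_payoff (c : R) (F : R -> R) (p : R -> R) (ql qh : R)
  (mu : {measure set R -> \bar R})
  d (X : measurableType d) (k : R -> {measure set X -> \bar R}) (m : X -> R)
  : \bar R :=
  (\int[mu]_(q in `[ql, qh]) \int[k q]_x (profit c F (p (m x)) (m x))%:E)%E.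

Definition full_revelation : R -> {measure set R -> \bar R} := fun q => \d_ q.

End Defs.

From HB Require Import structures.
From mathcomp Require Import all_boot all_order all_algebra.
From mathcomp Require Import all_classical all_reals all_analysis.
From mathcomp Require Import measurable_realfun.
From mathcomp Require Import ring lra.
Set Implicit Arguments. Unset Strict Implicit. Unset Printing Implicit Defensive.
Import Order.TTheory GRing.Theory Num.Theory.
Import numFieldNormedType.Exports.
Local Open Scope classical_set_scope.
Local Open Scope ring_scope.

(** Write V(y) = (p(y) - c) (1 - F(p(y)/y)) for Seller's optimal profit at
    expected quality y. Quoting the relative price t = p(y)/y at quality z
    earns (z t - c) (1 - F t): this is affine in z, at most V(z) and equal to
    V(y) at z = y. Hence V is convex on Q, with these supporting lines.
    Seller's payoff is E[V(m)] for the posterior mean m, and E[V(q)] under full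
    revelation, so the claim is Jensen's inequality for m = E[q | x]. To prove
    it, cut Q into n cells and on the event {m in cell j} replace the supporting
    line at m by the one at the left end of cell j; as the slopes increase along
    Q, this costs at most their total increase times the cell width (qh - ql)/n.
    The defining identity of the posterior mean, applied on these events, then
    turns each affine term in m into the same term in q, which is at most V(q). *)

Section clamp.
Variable R : realType.

(* Composing with [clamp a b] extends a function on [a, b] to all of R while
   keeping it Lipschitz, hence measurable. *)
Definition clamp (a b y : R) := if y < a then a else if b < y then b else y.

Lemma clamp_itv a b y : a <= b -> a <= clamp a b y <= b.
Proof.
move=> ab; rewrite /clamp; case: ltrP => ya; first by rewrite lexx ab.
by case: ltrP => yb; [rewrite ab lexx | rewrite ya yb].
Qed.

Lemma clamp_id a b y : a <= y <= b -> clamp a b y = y.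
Proof. by case/andP=> ya yb; rewrite /clamp ltNge ya /= ltNge yb. Qed.

Lemma clamp_lipschitz a b y z : a <= b -> `|clamp a b y - clamp a b z| <= `|y - z|.
Proof.
move=> ab; rewrite /clamp.
case: (ltrP y a) => ya; case: (ltrP z a) => za;
  try case: (ltrP b y) => yb; try case: (ltrP b z) => zb;
  rewrite ?subrr ?normr0 ?normr_ge0 //;
  rewrite !ler_norml; (apply/andP; split); try lra;
  have := ler_norm (y - z); have := ler_norm (z - y); rewrite distrC; lra.
Qed.

Lemma lipschitz_continuous (f : R -> R) L :
  (forall y z, `|f y - f z| <= L * `|y - z|) -> continuous f.
Proof.
move=> fL x; apply/cvgrPdist_le => e e0.
have L1 : 0 < `|L| + 1 by rewrite ltr_pwDr.
have d0 : 0 < e / (`|L| + 1) by rewrite divr_gt0.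
near=> t.
have : ball x (e / (`|L| + 1)) t by near: t; exact: (near_ball x (e / (`|L| + 1)) d0).
rewrite -ball_normE /= ltr_pdivlMr // => xt.
have := fL x t; have := ler_norm L; have := normr_ge0 (x - t); nra.
Unshelve. all: by end_near. Qed.

Lemma measurable_clamp a b : a <= b -> measurable_fun [set: R] (clamp a b).
Proof.
move=> ab; apply: continuous_measurable_fun.
by apply: (@lipschitz_continuous _ 1) => y z; rewrite mul1r clamp_lipschitz.
Qed.

End clamp.

Lemma normr_itv_le (R : realType) (a b x : R) : a <= x <= b -> `|x| <= `|a| + `|b|.
Proof.
case/andP=> ax xb; rewrite ler_norml.
have := ler_norm a; have := ler_norm (- a); have := ler_norm b; rewrite normrN.
by have := normr_ge0 a; have := normr_ge0 b => *; apply/andP; split; lra.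
Qed.

Lemma bounded_on_le (R : realType) (T : Type) (A : set T) (f : T -> R) (M : R) :
  (forall t, A t -> `|f t| <= M) -> [bounded f t | t in A].
Proof.
move=> fM; rewrite /bounded_near; near=> M' => t At /=.
by apply: le_trans (fM t At) _; near: M'; apply: nbhs_pinfty_ge; rewrite num_real.
Unshelve. all: by end_near. Qed.

Section bounded_measurable.
Context {R : realType} {d} {T : measurableType d}.

Definition bounded_measurable (f : T -> R) :=
  measurable_fun [set: T] f /\ exists M, forall t, `|f t| <= M.

Lemma bounded_measurable_cst (r : R) : bounded_measurable (fun=> r).
Proof. by split => //; exists `|r|. Qed.

Lemma bounded_measurable_itv (f : T -> R) (a b : R) : measurable_fun [set: T] f ->
  (forall t, a <= f t <= b) -> bounded_measurable f.
Proof.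
by move=> mf fab; split => //; exists (`|a| + `|b|) => t; exact: normr_itv_le.
Qed.

Lemma bounded_measurable_indic A : measurable A ->
  bounded_measurable (\1_A : T -> R).
Proof.
move=> mA; apply: (@bounded_measurable_itv _ 0 1); first exact: measurable_indic.
by move=> t; rewrite indicE; case: (_ \in _); rewrite lexx ler01.
Qed.

Lemma bounded_measurableD (f g : T -> R) : bounded_measurable f -> bounded_measurable g ->
  bounded_measurable (fun t => f t + g t).
Proof.
move=> [mf [M1 fM1]] [mg [M2 gM2]]; split; first exact: measurable_funD.
by exists (M1 + M2) => t; apply: le_trans (ler_normD _ _) _; exact: lerD.
Qed.

Lemma bounded_measurableM (f g : T -> R) : bounded_measurable f -> bounded_measurable g ->
  bounded_measurable (fun t => f t * g t).
Proof.
move=> [mf [M1 fM1]] [mg [M2 gM2]]; split; first exact: measurable_funM.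
by exists (M1 * M2) => t; rewrite normrM; exact: ler_pM.
Qed.

Lemma bounded_measurable_sum n (F : 'I_n -> T -> R) :
  (forall j, bounded_measurable (F j)) ->
  bounded_measurable (fun t => \sum_(j < n) F j t).
Proof.
elim: n F => [|n IHn] F bF.
  by under eq_fun do rewrite big_ord0; exact: bounded_measurable_cst.
under eq_fun do rewrite big_ord_recl.
by apply: bounded_measurableD => //; apply: IHn.
Qed.

End bounded_measurable.

Lemma bounded_measurable_comp (R : realType) d (T : measurableType d)
    d' (T' : measurableType d') (g : T' -> T) (f : T -> R) :
  measurable_fun [set: T'] g -> bounded_measurable f -> bounded_measurable (f \o g).
Proof.
move=> mg [mf [M fM]]; split; first exact: measurableT_comp.
by exists M => t; exact: fM.
Qed.

Section supporting_lines.
Variables (R : realType) (a b : R) (V sl ic : R -> R).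
Hypothesis ab : a <= b.
Hypothesis le_support : forall y z, a <= y <= b -> a <= z <= b ->
  sl y * z + ic y <= V z.
Hypothesis eq_support : forall y, a <= y <= b -> sl y * y + ic y = V y.

Let a_itv : a <= a <= b. Proof. by rewrite lexx ab. Qed.
Let b_itv : a <= b <= b. Proof. by rewrite lexx ab. Qed.

Lemma support_slope_homo y z : a <= y <= b -> a <= z <= b -> y <= z -> sl y <= sl z.
Proof.
move=> yab zab; rewrite le_eqVlt => /predU1P[-> //|yz].
have := le_support yab zab; have := le_support zab yab.
have := eq_support yab; have := eq_support zab => *.
have : (sl y - sl z) * (z - y) <= 0 by nra.
by rewrite pmulr_lle0 ?subr_gt0 // subr_le0.
Qed.

Lemma support_slope_itv y : a <= y <= b -> sl a <= sl y <= sl b.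
Proof.
move=> yab; have /andP[ay yb] := yab.
by rewrite !support_slope_homo.
Qed.

Lemma le_support_near y g h : a <= y <= b -> a <= g <= b -> `|y - g| <= h ->
  V y <= sl g * y + ic g + (sl b - sl a) * h.
Proof.
move=> yab gab ygh.
have /andP[sy1 sy2] := support_slope_itv yab.
have /andP[sg1 sg2] := support_slope_itv gab.
have := le_support yab gab; have := eq_support yab; have := eq_support gab => *.
have gap : V y <= sl g * y + ic g + (sl y - sl g) * (y - g) by nra.
apply: le_trans gap _; rewrite lerD2l.
apply: le_trans (ler_norm _) _; rewrite normrM.
by apply: ler_pM => //; rewrite ler_norml; apply/andP; split; lra.
Qed.

Lemma support_slope_norm_le y : a <= y <= b -> `|sl y| <= `|sl a| + `|sl b|.
Proof.
by move=> /support_slope_itv; exact: normr_itv_le.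
Qed.

Lemma support_value_lipschitz y z : a <= y <= b -> a <= z <= b ->
  `|V y - V z| <= (`|sl a| + `|sl b|) * `|y - z|.
Proof.
move=> yab zab.
have := le_support yab zab; have := le_support zab yab.
have := eq_support yab; have := eq_support zab => *.
have sly := support_slope_norm_le yab; have slz := support_slope_norm_le zab.
have lower : sl z * (y - z) <= V y - V z by nra.
have upper : V y - V z <= sl y * (y - z) by nra.
have := ler_norm (sl y * (y - z)); have := ler_norm (- (sl z * (y - z))).
rewrite normrN !normrM => *.
have := ler_wpM2r (normr_ge0 (y - z)) sly.
have := ler_wpM2r (normr_ge0 (y - z)) slz.
by move=> *; rewrite ler_norml; apply/andP; split; lra.
Qed.

Lemma clamped_value_lipschitz y z :
  `|V (clamp a b y) - V (clamp a b z)| <= (`|sl a| + `|sl b|) * `|y - z|.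
Proof.
apply: le_trans (support_value_lipschitz (clamp_itv y ab) (clamp_itv z ab)) _.
by apply: ler_wpM2l (clamp_lipschitz y z ab); rewrite addr_ge0.
Qed.

Lemma bounded_measurable_clamped_value : bounded_measurable (V \o clamp a b).
Proof.
split.
  by apply: continuous_measurable_fun; exact: lipschitz_continuous clamped_value_lipschitz.
exists (`|V a| + (`|sl a| + `|sl b|) * (b - a)) => y /=.
have yab := clamp_itv y ab; have /andP[y1 y2] := yab.
have := support_value_lipschitz yab a_itv.
have : `|clamp a b y - a| <= b - a by rewrite ger0_norm ?subr_ge0 ?lerD2r.
move=> /(ler_wpM2l (addr_ge0 (normr_ge0 (sl a)) (normr_ge0 (sl b)))) ? ?.
have := ler_normD (V (clamp a b y) - V a) (V a); rewrite subrK; lra.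
Qed.

End supporting_lines.

Section grid.
Variables (R : realType) (a b : R) (n : nat).
Hypothesis ab : a < b.
Hypothesis n_gt0 : (0 < n)%N.

Definition grid_step := (b - a) / n%:R.
Definition grid_point (j : nat) := a + j%:R * grid_step.
Definition grid_cell (j : nat) : set R :=
  [set y | grid_point j <= y < grid_point j + grid_step].

Lemma measurable_grid_cell j : measurable (grid_cell j).
Proof.
have -> : grid_cell j = `[grid_point j, grid_point j + grid_step[%classic.
  by apply/seteqP; split => y; rewrite /grid_cell /= in_itv.
exact: measurable_itv.
Qed.

Lemma grid_step_gt0 : 0 < grid_step.
Proof. by rewrite divr_gt0 ?subr_gt0 // ltr0n. Qed.

Lemma in_grid_cell y : a <= y <= b -> exists j : 'I_n.+1, grid_cell j y.
Proof.
move=> /andP[ay yb]; have h0 := grid_step_gt0.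
set t := (y - a) / grid_step.
have t0 : 0 <= t by rewrite divr_ge0 // ?subr_ge0 // ltW.
have tn : t <= n%:R.
  rewrite /t ler_pdivrMr // /grid_step mulrCA divff ?mulr1 ?lerD2r //.
  by rewrite pnatr_eq0 -lt0n.
have jn : (Num.truncn t < n.+1)%N by rewrite ltnS truncn_le_nat; lra.
exists (Ordinal jn); rewrite /grid_cell /grid_point /=.
have /andP[] := truncn_itv t0.
rewrite /t ler_pdivlMr // ltr_pdivrMr // -addn1 natrD mulrDl => ? ?.
by apply/andP; split; lra.
Qed.

Lemma grid_cell_uniq y (i j : 'I_n.+1) : grid_cell i y -> grid_cell j y -> i = j.
Proof.
rewrite /grid_cell /grid_point /= => /andP[i1 i2] /andP[j1 j2].
have h0 := grid_step_gt0.
have ij : (i%:R : R) < j%:R + 1 by rewrite -(ltr_pM2r h0) mulrDl mul1r; lra.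
have ji : (j%:R : R) < i%:R + 1 by rewrite -(ltr_pM2r h0) mulrDl mul1r; lra.
move: ij ji; rewrite !natr1 !ltr_nat !ltnS => ij ji.
by apply: val_inj; apply/eqP; rewrite eqn_leq ij ji.
Qed.

Lemma grid_cell_near y (j : 'I_n.+1) : a <= y <= b -> grid_cell j y ->
  a <= grid_point j <= b /\ `|y - grid_point j| <= grid_step.
Proof.
move=> /andP[ay yb]; rewrite /grid_cell /grid_point /= => /andP[j1 j2].
have : 0 <= j%:R * grid_step by rewrite mulr_ge0 // ltW // grid_step_gt0.
by move=> ?; split; [apply/andP; split | rewrite ger0_norm]; lra.
Qed.

Lemma sum_grid_cell_indic y (G : 'I_n.+1 -> R) (j : 'I_n.+1) : grid_cell j y ->
  \sum_(i < n.+1) \1_(grid_cell i) y * G i = G j.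
Proof.
move=> yj; rewrite (bigD1 j) //= big1 ?addr0; first by rewrite indicE mem_set // mul1r.
move=> i ij; rewrite indicE memNset ?mul0r // => yi.
by move: ij; rewrite (grid_cell_uniq yi yj) eqxx.
Qed.

End grid.

Section joint_integral.
Local Open Scope ereal_scope.
Context (R : realType) d (X : measurableType d).
Variables (k : R.-pker R ~> X) (mu : {measure set R -> \bar R}) (a b : R).
Hypothesis mu_itv : mu `[a, b]%classic = 1.

Definition joint_integral (f : R * X -> R) :=
  \int[mu]_(q in `[a, b]) \int[k q]_x (f (q, x))%:E.

Let mitv : measurable `[a, b]%classic. Proof. exact: measurable_itv. Qed.

Lemma kernel_integrable (f : R * X -> R) q : bounded_measurable f ->
  (k q).-integrable [set: X] (fun x => (f (q, x))%:E).
Proof.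
move=> [mf [M fM]].
apply: (@measurable_bounded_integrable _ _ R (k q) (fun x => f (q, x)) _ measurableT).
- by rewrite prob_kernel ltry.
- exact: measurable_fun_pair2.
- by apply: (@bounded_on_le _ _ _ _ M) => x _; exact: fM.
Qed.

Lemma abse_kernel_integral_le (f : R * X -> R) (M : R) q : measurable_fun [set: R * X] f ->
  (forall z, (`|f z| <= M)%R) -> `|\int[k q]_x (f (q, x))%:E| <= M%:E.
Proof.
move=> mf fM.
have mfq : measurable_fun [set: X] (fun x => (f (q, x))%:E).
  exact/measurable_EFinP/measurable_fun_pair2.
apply: le_trans (le_abse_integral (k q) measurableT mfq) _.
apply: le_trans (@integral_le_bound _ _ _ (k q) _ _ M%:E measurableT mfq _ _) _.
- by rewrite lee_fin (le_trans (normr_ge0 _) (fM (q, point))).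
- by apply: aeW => x _ /=; rewrite lee_fin.
- by rewrite prob_kernel mule1.
Qed.

Lemma measurable_kernel_integral (f : R * X -> R) : measurable_fun [set: R * X] f ->
  measurable_fun [set: R] (fun q => \int[k q]_x (f (q, x))%:E).
Proof.
move=> mf; have mEf : measurable_fun [set: R * X] (EFin \o f).
  exact/measurable_EFinP.
have -> : (fun q => \int[k q]_x (f (q, x))%:E) = (fun q =>
    \int[k q]_x ((EFin \o f)^\+ (q, x)) - \int[k q]_x ((EFin \o f)^\- (q, x))).
  apply/funext => q; rewrite [LHS]integralE.
  by congr (_ - _); apply: eq_integral => x _; rewrite ?funeposE ?funenegE.
apply: emeasurable_funB.
- apply: (measurable_fun_integral_finite_kernel _ k) => //.
  exact: measurable_funepos.
- apply: (measurable_fun_integral_finite_kernel _ k) => //.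
  exact: measurable_funeneg.
Qed.

Lemma joint_integrable (f : R * X -> R) : bounded_measurable f ->
  mu.-integrable `[a, b] (fun q => \int[k q]_x (f (q, x))%:E).
Proof.
move=> [mf [M fM]].
have mI := measurable_funTS (measurable_kernel_integral mf) : measurable_fun `[a, b] _.
apply/integrableP; split => //.
apply: le_lt_trans (@integral_le_bound _ _ _ mu _ _ M%:E mitv mI _ _) _.
- by rewrite lee_fin (le_trans (normr_ge0 _) (fM (point, point))).
- by apply: aeW => q _; exact: abse_kernel_integral_le.
- by rewrite mu_itv mule1 ltry.
Qed.

Lemma joint_integralD (f g : R * X -> R) : bounded_measurable f -> bounded_measurable g ->
  joint_integral (fun z => f z + g z)%R = joint_integral f + joint_integral g.
Proof.
move=> bf bg; rewrite /joint_integral -integralD //; try exact: joint_integrable.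
apply: eq_integral => q _; under eq_integral do rewrite EFinD.
by rewrite integralD //; exact: kernel_integrable.
Qed.

Lemma joint_integralZl (r : R) (f : R * X -> R) : bounded_measurable f ->
  joint_integral (fun z => r * f z)%R = r%:E * joint_integral f.
Proof.
move=> bf; rewrite /joint_integral -integralZl //; last exact: joint_integrable.
apply: eq_integral => q _; under eq_integral do rewrite EFinM.
by rewrite integralZl //; exact: kernel_integrable.
Qed.

Lemma joint_integral_cst (r : R) : joint_integral (fun=> r) = r%:E.
Proof.
rewrite /joint_integral.
under eq_integral => q _ do rewrite integral_cst // prob_kernel mule1.
by rewrite integral_cst // mu_itv mule1.
Qed.

Lemma joint_integral_sum n (F : 'I_n -> R * X -> R) :
  (forall j, bounded_measurable (F j)) ->
  joint_integral (fun z => \sum_(j < n) F j z)%R = \sum_(j < n) joint_integral (F j).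
Proof.
move=> bF; rewrite /joint_integral.
under eq_integral => q _ do (under eq_integral do rewrite -sumEFin;
  rewrite integral_sum //; last by move=> j; exact: kernel_integrable).
by rewrite integral_sum // => j; exact: joint_integrable.
Qed.

Lemma le_joint_integral (f g : R * X -> R) : bounded_measurable f -> bounded_measurable g ->
  (forall q x, (a <= q <= b)%R -> (f (q, x) <= g (q, x))%R) ->
  joint_integral f <= joint_integral g.
Proof.
move=> bf bg fg; apply: le_integral => //; try exact: joint_integrable.
move=> q; rewrite in_setE /= in_itv /= => qab.
apply: le_integral => //; try exact: kernel_integrable.
by move=> x _; rewrite lee_fin fg.
Qed.

End joint_integral.

Lemma joint_integral_fst (R : realType) d (X : measurableType d)
    (k : R.-pker R ~> X) (mu : {measure set R -> \bar R}) (a b : R) (g : R -> R) :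
  joint_integral k mu a b (fun z => g z.1) = (\int[mu]_(q in `[a, b]) (g q)%:E)%E.
Proof.
by apply: eq_integral => q _ /=; rewrite integral_cst // prob_kernel mule1.
Qed.

Section jensen.
Local Open Scope ereal_scope.
Context (R : realType) d (X : measurableType d).
Variables (k : R.-pker R ~> X) (mu : {measure set R -> \bar R}) (a b : R).
Hypothesis ab : (a < b)%R.
Hypothesis mu_itv : mu `[a, b]%classic = 1.
Variable m : X -> R.
Hypothesis m_mean : is_posterior_mean a b mu k m.

Let J := joint_integral k mu a b.
Let cl := clamp a b.

Let mm : measurable_fun [set: X] m. Proof. by case: m_mean. Qed.
Let m_itv x : (a <= m x <= b)%R. Proof. by case: m_mean. Qed.

Let bounded_measurable_m : bounded_measurable (fun z : R * X => m z.2).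
Proof.
apply: (bounded_measurable_itv _ (fun z => m_itv z.2)).
exact: measurableT_comp mm measurable_snd.
Qed.

Let bounded_measurable_cl : bounded_measurable (fun z : R * X => cl z.1).
Proof.
apply: (bounded_measurable_itv _ (fun z => clamp_itv z.1 (ltW ab))).
by apply: measurableT_comp; [exact: measurable_clamp (ltW ab) | exact: measurable_fst].
Qed.

Let bounded_measurable_indic_m A : measurable A ->
  bounded_measurable (fun z : R * X => \1_A (m z.2) : R).
Proof.
move=> mA; apply: (bounded_measurable_comp (g := m \o snd)).
  exact: measurableT_comp mm measurable_snd.
exact: bounded_measurable_indic.
Qed.

Lemma posterior_mean_indic A : measurable A ->
  J (fun z => \1_A (m z.2) * m z.2)%R = J (fun z => \1_A (m z.2) * cl z.1)%R.
Proof.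
move=> mA; have mB : measurable (m @^-1` A) by rewrite -[_ @^-1` _]setTI; exact: mm.
have [_ _ mean] := m_mean.
have lhs q : \int[k q]_x ((\1_A (m x) * m x)%R)%:E = \int[k q]_(x in m @^-1` A) (m x)%:E.
  rewrite -[in RHS](setTI (m @^-1` A)) integral_mkcondr.
  by apply: eq_integral => x _; rewrite epatch_indic EFinM muleC !indicE.
have rhs q : (a <= q <= b)%R ->
    \int[k q]_x ((\1_A (m x) * cl q)%R)%:E = q%:E * k q (m @^-1` A).
  move=> qab; under eq_integral do rewrite EFinM muleC.
  rewrite integralZl //; last exact: kernel_integrable (bounded_measurable_indic_m mA).
  have -> : (fun x => (\1_A (m x) : R)%:E) = (fun x => (\1_(m @^-1` A) x : R)%:E).
    by apply/funext => x; rewrite !indicE.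
  by rewrite integral_indic // setIT /cl clamp_id.
rewrite /J /joint_integral; under eq_integral do rewrite lhs.
rewrite -mean //; apply: eq_integral => q; rewrite in_setE /= in_itv /= => qab.
by rewrite rhs.
Qed.

Lemma posterior_mean_affine_indic A (s t : R) : measurable A ->
  J (fun z => \1_A (m z.2) * (s * m z.2 + t))%R =
  J (fun z => \1_A (m z.2) * (s * cl z.1 + t))%R.
Proof.
move=> mA; have bI := bounded_measurable_indic_m mA.
have split_affine (g : R * X -> R) : bounded_measurable g ->
    J (fun z => \1_A (m z.2) * (s * g z + t))%R =
    s%:E * J (fun z => \1_A (m z.2) * g z)%R + t%:E * J (fun z => \1_A (m z.2))%R.
  move=> bg; have bIg := bounded_measurableM bI bg.
  have bsIg := bounded_measurableM (bounded_measurable_cst s) bIg.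
  have btI := bounded_measurableM (bounded_measurable_cst t) bI.
  rewrite /J -(joint_integralZl k mu_itv s bIg) -(joint_integralZl k mu_itv t bI).
  rewrite -(joint_integralD k mu_itv bsIg btI).
  by congr joint_integral; apply/funext => z; ring.
rewrite !split_affine //; congr (_ * _ + _).
exact: posterior_mean_indic.
Qed.

Variables (V sl ic : R -> R).
Hypothesis le_support : forall y z, (a <= y <= b)%R -> (a <= z <= b)%R ->
  (sl y * z + ic y <= V z)%R.
Hypothesis eq_support : forall y, (a <= y <= b)%R -> (sl y * y + ic y = V y)%R.

Let bounded_measurable_V_cl := bounded_measurable_clamped_value (ltW ab) le_support eq_support.

Let bounded_measurable_V_m : bounded_measurable (fun z : R * X => V (cl (m z.2))).
Proof.
apply: (bounded_measurable_comp (g := m \o snd)) bounded_measurable_V_cl.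
exact: measurableT_comp mm measurable_snd.
Qed.

Let bounded_measurable_V_q : bounded_measurable (fun z : R * X => V (cl z.1)).
Proof. exact: bounded_measurable_comp measurable_fst bounded_measurable_V_cl. Qed.

Section grid_approximation.
Variable n : nat.
Hypothesis n_gt0 : (0 < n)%N.

Let support_step (y u : R) := (\sum_(j < n.+1) \1_(grid_cell a b n j) y *
  (sl (grid_point a b n j) * u + ic (grid_point a b n j)))%R.

Let le_support_step y : (a <= y <= b)%R ->
  (V y <= support_step y y + (sl b - sl a) * grid_step a b n)%R.
Proof.
move=> yab; have [j yj] := in_grid_cell ab n_gt0 yab.
rewrite /support_step (sum_grid_cell_indic ab n_gt0 _ yj).
have [jab yjn] := grid_cell_near ab n_gt0 yab yj.
exact: (le_support_near (ltW ab) le_support eq_support yab jab yjn).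
Qed.

Let support_step_le y u : (a <= y <= b)%R -> (a <= u <= b)%R ->
  (support_step y u <= V u)%R.
Proof.
move=> yab uab; have [j yj] := in_grid_cell ab n_gt0 yab.
rewrite /support_step (sum_grid_cell_indic ab n_gt0 _ yj).
by have [jab _] := grid_cell_near ab n_gt0 yab yj; exact: le_support.
Qed.

Let bounded_measurable_support_term j (h : R * X -> R) : bounded_measurable h ->
  bounded_measurable (fun z => \1_(grid_cell a b n j) (m z.2) *
    (sl (grid_point a b n j) * h z + ic (grid_point a b n j)))%R.
Proof.
move=> bh; apply: bounded_measurableM.
  exact: bounded_measurable_indic_m (measurable_grid_cell a b n j).
apply: bounded_measurableD (bounded_measurable_cst _).
exact: bounded_measurableM (bounded_measurable_cst _) bh.
Qed.

Let bounded_measurable_support_step (h : R * X -> R) : bounded_measurable h ->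
  bounded_measurable (fun z => support_step (m z.2) (h z)).
Proof.
by move=> bh; apply: bounded_measurable_sum => j; exact: bounded_measurable_support_term.
Qed.

Let joint_integral_support_step :
  J (fun z => support_step (m z.2) (m z.2)) = J (fun z => support_step (m z.2) (cl z.1)).
Proof.
rewrite /J /support_step !(joint_integral_sum k mu_itv) => [|j|j]; last 2 first.
- exact: bounded_measurable_support_term bounded_measurable_cl.
- exact: bounded_measurable_support_term bounded_measurable_m.
apply: eq_bigr => j _.
exact: posterior_mean_affine_indic (measurable_grid_cell a b n j).
Qed.

Lemma jensen_grid :
  J (fun z => V (cl (m z.2))) <=
  J (fun z => V (cl z.1)) + ((sl b - sl a) * grid_step a b n)%:E.
Proof.
set e := ((sl b - sl a) * grid_step a b n)%R.
have bme := bounded_measurable_support_step bounded_measurable_m.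
have bqe := bounded_measurable_support_step bounded_measurable_cl.
have shift_e (f : R * X -> R) : bounded_measurable f ->
    J (fun z => f z + e)%R = J f + e%:E.
  by move=> bf; rewrite /J joint_integralD ?joint_integral_cst //; exact: bounded_measurable_cst.
apply: (@le_trans _ _ (J (fun z => support_step (m z.2) (m z.2) + e)%R)).
  apply: le_joint_integral => // [|q x _].
    exact: bounded_measurableD bme (bounded_measurable_cst _).
  by rewrite /cl clamp_id //; exact: le_support_step.
rewrite shift_e // joint_integral_support_step; apply: leeD2r.
apply: le_joint_integral => // q x qab.
by rewrite /cl !clamp_id //; exact: support_step_le.
Qed.

End grid_approximation.

Lemma jensen_posterior_mean : J (fun z => V (cl (m z.2))) <= J (fun z => V (cl z.1)).
Proof.
apply/lee_addgt0Pr => e e_gt0.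
(* the grid error (sl b - sl a) (b - a) / n is below e for this n *)
pose n := (Num.truncn ((sl b - sl a) * (b - a) / e)).+1.
apply: le_trans (jensen_grid (ltn0Sn _ : (0 < n)%N)) _.
apply: leeD2l; rewrite lee_fin.
have := truncnS_gt ((sl b - sl a) * (b - a) / e); rewrite -/n ltr_pdivrMr // => n_gt.
by rewrite /grid_step mulrA ler_pdivrMr ?ltr0n //; lra.
Qed.

End jensen.

Section optimal_profit.
Variables (R : realType) (c a b : R) (F p : R -> R).

Definition optimal_profit y := profit c F (p y) y.
Definition profit_slope y := p y / y * (1 - F (p y / y)).
Definition profit_intercept y := - c * (1 - F (p y / y)).

Lemma profit_relative_price y z : z != 0 ->
  profit c F (z * (p y / y)) z = profit_slope y * z + profit_intercept y.
Proof.
by move=> z0; rewrite /profit /profit_slope /profit_intercept (mulrC z) mulfK //; ring.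
Qed.

Hypothesis a_gt0 : 0 < a.

Let itv_neq0 y : a <= y <= b -> y != 0.
Proof. by case/andP=> ay _; rewrite gt_eqF // (lt_le_trans a_gt0). Qed.

Lemma eq_profit_support y : a <= y <= b ->
  profit_slope y * y + profit_intercept y = optimal_profit y.
Proof. by move=> yab; rewrite -profit_relative_price ?itv_neq0 // mulrC divfK ?itv_neq0. Qed.

Hypothesis p_opt : forall q, a <= q <= b ->
  forall p', profit c F p' q <= profit c F (p q) q.

Lemma le_profit_support y z : a <= y <= b -> a <= z <= b ->
  profit_slope y * z + profit_intercept y <= optimal_profit z.
Proof. by move=> yab zab; rewrite -profit_relative_price ?itv_neq0 //; exact: p_opt. Qed.

End optimal_profit.

Section seller_payoff.
Local Open Scope ereal_scope.
Variables (R : realType) (c a b : R) (F p : R -> R) (mu : {measure set R -> \bar R}).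

Lemma seller_payoffE d (X : measurableType d) (k : R -> {measure set X -> \bar R})
    (m : X -> R) : (forall x, a <= m x <= b)%R ->
  seller_payoff c F p a b mu k m =
  \int[mu]_(q in `[a, b]) \int[k q]_x (optimal_profit c F p (clamp a b (m x)))%:E.
Proof.
by move=> m_itv; apply: eq_integral => q _; apply: eq_integral => x _; rewrite clamp_id.
Qed.

Hypothesis mu_itv : mu `[a, b]%classic = 1.

Lemma full_revelation_mean_ae (m0 : R -> R) :
  is_posterior_mean a b mu full_revelation m0 ->
  ae_eq mu `[a, b]%classic (fun q => q%:E) (EFin \o m0).
Proof.
move=> [mm0 _ mean]; have mitv : measurable `[a, b]%classic by exact: measurable_itv.
have q_int : mu.-integrable `[a, b] (fun q => q%:E).
  apply: (@measurable_bounded_integrable _ _ R mu id _ mitv).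
  - by rewrite mu_itv ltry.
  - exact: measurable_funTS.
  - apply: (@bounded_on_le _ _ _ _ (`|a| + `|b|)%R) => y.
    by rewrite /= in_itv /=; exact: normr_itv_le.
apply: (integral_ae_eq mitv q_int); first exact/measurable_EFinP/measurable_funTS.
move=> E Eab mE; rewrite -(setIidr Eab).
have full_revelation_indic q A : full_revelation q A = (\1_A q)%:E.
  exact: diracE.
rewrite !integral_mkcondr.
transitivity (\int[mu]_(q in `[a, b]) (q%:E * full_revelation q E)).
  by apply: eq_integral => q _; rewrite epatch_indic full_revelation_indic.
rewrite mean //; apply: eq_integral => q _.
rewrite integral_dirac //; last exact/measurable_EFinP/measurable_funTS.
by rewrite epatch_indic muleC full_revelation_indic.
Qed.

Lemma integral_full_revelation (m0 g : R -> R) : measurable_fun [set: R] g ->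
  is_posterior_mean a b mu full_revelation m0 ->
  \int[mu]_(q in `[a, b]) \int[full_revelation q]_x (g (m0 x))%:E =
  \int[mu]_(q in `[a, b]) (g q)%:E.
Proof.
move=> mg m0_mean; have [mm0 _ _] := m0_mean.
have mgm0 : measurable_fun [set: R] (fun q => (g (m0 q))%:E).
  by apply/measurable_EFinP; exact: measurableT_comp mg mm0.
under eq_integral do rewrite integral_dirac // diracT mul1e.
have ae_g : ae_eq mu `[a, b]%classic (fun q => (g (m0 q))%:E) (fun q => (g q)%:E).
  apply: filterS (full_revelation_mean_ae m0_mean) => q m0q qab.
  by case: (m0q qab) => <-.
apply: (ae_eq_integral _ _ (measurable_itv _) _ _ ae_g).
- exact: measurable_funTS mgm0.
- by apply: measurable_funTS; exact/measurable_EFinP.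
Qed.

End seller_payoff.

Unset Implicit Arguments.

Theorem corollary1 (R : realType) (ql qh c : R) (F f p : R -> R)
  (mu : probability R R)
  (* 0 < c < q_l < q_h *)
  (Hc0 : 0 < c) (Hcql : c < ql) (Hq : ql < qh)
  (* f : (0,1) -> R_{>0}, twice continuously differentiable *)
  (Hfpos : forall v : R, 0 < v < 1 -> 0 < f v)
  (Hfder : forall v : R, 0 < v < 1 ->
     [/\ derivable f v 1, derivable (derive1 f) v 1 & {for v, continuous (derive1 (derive1 f))}])
  (* F is the c.d.f. of the law on [0,1] with density f *)
  (HF0 : forall v : R, v < 0 -> F v = 0)
  (HF1 : forall v : R, 1 <= v -> F v = 1)
  (HFf : forall v : R, 0 <= v <= 1 ->
     (\int[lebesgue_measure]_(x in `[0%R, v]) (f x)%:E)%E = (F v)%:E)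
  (* psi'(v) > 0 whenever psi(v) > 0 *)
  (Hpsi : forall v : R, 0 < v < 1 -> 0 < virtual_value F f v ->
     0 < derive1 (virtual_value F f) v)
  (* p(q) is the unique maximizer of (p - c)(1 - F(p/q)) over p in R *)
  (Hp : forall q, ql <= q <= qh ->
     forall p', p' != p q -> profit c F p' q < profit c F (p q) q)
  (* the prior mu is concentrated on Q = [ql, qh] with support Q *)
  (HmuQ : mu `[ql, qh]%classic = 1%E)
  (Hsupp : forall x e : R, ql <= x <= qh -> 0 < e -> (0 < mu `](x - e)%R, (x + e)%R[%classic)%E) :
  forall (m0 : R -> R),
    is_posterior_mean ql qh mu full_revelation m0 ->
  forall (d : measure_display) (X : measurableType d) (k : R.-pker R ~> X)
    (m : X -> R),
    is_posterior_mean ql qh mu k m ->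
    (seller_payoff c F p ql qh mu k m
     <= seller_payoff c F p ql qh mu full_revelation m0)%E.
Proof.
move=> m0 m0_mean d X k m m_mean.
have ql_gt0 : 0 < ql := lt_trans Hc0 Hcql.
have p_opt q : ql <= q <= qh -> forall p', profit c F p' q <= profit c F (p q) q.
  move=> qQ p'; have [-> //|p'_neq] := eqVneq p' (p q).
  exact/ltW/Hp.
have le_support := le_profit_support ql_gt0 p_opt.
have eq_support := @eq_profit_support _ c ql qh F p ql_gt0.
have [measurable_value _] := bounded_measurable_clamped_value (ltW Hq) le_support eq_support.
rewrite !seller_payoffE; [|by case: m0_mean | by case: m_mean].
rewrite (integral_full_revelation HmuQ measurable_value m0_mean).
rewrite -(joint_integral_fst k).
exact: (jensen_posterior_mean Hq HmuQ m_mean le_support eq_support).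
Qed.
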